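(* Let $\nu>0$, $q\ge0$, $k\ge1$, let $\pi_0,\ldots,\pi_k>0$ with $\sum_j\pi_j=1$, let $\lambda_0,\ldots,\lambda_k\ge1$, and let $c_0,\ldots,c_k\in\mathbb R$ satisfy \[ \sum_{j=0}^k c_j=1,\qquad \sum_{j=0}^k c_j\lambda_j=0. \] Then \[ K_{q,k}:=\nu\left[\sum_{j=0}^k\frac{c_j^2\lambda_j^q}{\pi_j}-1\right]>0. \]
   Context: In the application, $\lambda_j$ are the noise scale factors of a Richardson zero-noise-extrapolation rule of order $k$ (so the coefficients also satisfy $\sum_j c_j\lambda_j^m=0$ for $m=1,\ldots,k$), $\pi_j$ are the fractions of the total shot budget allocated to scale $\lambda_j$, and $\nu\epsilon^q$ is the leading term of the single-shot variance $v(\epsilon)$; $K_{q,k}\epsilon^q/B$ is then the leading excess variance of the Richardson estimator over the unmitigated estimator with budget $B$. *)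

From mathcomp Require Import all_boot all_order all_algebra.
From mathcomp Require Import all_classical all_reals all_analysis.

From mathcomp Require Import all_boot all_order all_algebra.
From mathcomp Require Import all_classical all_reals all_analysis.
From mathcomp Require Import ring.
Import Order.TTheory GRing.Theory Num.Theory.

Set Implicit Arguments.
Unset Strict Implicit.
Unset Printing Implicit Defensive.
Local Open Scope ring_scope.

(* Since lam_j >= 1 and q >= 0, the weights lam_j^q are at least 1, so it is
   enough to show sum_j c_j^2 / pi_j > 1.  When both c and pi sum to 1,
   sum_j c_j^2 / pi_j - 1 is the chi-square divergence
   sum_j (c_j - pi_j)^2 / pi_j, which vanishes only for c = pi.  But c <> pi:
   sum_j c_j lam_j = 0 with lam_j > 0 forces some c_j <= 0 < pi_j. *)

Section FiniteWeightedSums.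
Variables (R : realFieldType) (I : finType).
Implicit Types (c p w : I -> R).

Lemma sum_sqr_div_sub1 c p : (forall j, p j != 0) ->
  \sum_j p j = 1 -> \sum_j c j = 1 ->
  \sum_j c j ^+ 2 / p j - 1 = \sum_j (c j - p j) ^+ 2 / p j.
Proof.
move=> p_neq0 sum_p sum_c.
have expand j : (c j - p j) ^+ 2 / p j = c j ^+ 2 / p j - 2 * c j + p j.
  by field; exact: p_neq0.
under [RHS]eq_bigr => j _ do rewrite expand.
by rewrite !big_split /= sumrN -mulr_sumr sum_c sum_p; ring.
Qed.

Lemma sum_sqr_div_gt0 c p (j0 : I) : (forall j, 0 < p j) -> c j0 != p j0 ->
  0 < \sum_j (c j - p j) ^+ 2 / p j.
Proof.
move=> p_gt0 c_neq_p.
rewrite (bigD1 j0) //=; apply: ltr_pwDl.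
  by rewrite divr_gt0 // exprn_even_gt0 //= subr_eq0.
by apply: sumr_ge0 => j _; rewrite divr_ge0 ?sqr_ge0 ?ltW.
Qed.

Lemma exists_le0_of_wsum_eq0 c w (j0 : I) : (forall j, 0 < w j) ->
  \sum_j c j * w j = 0 -> exists j, c j <= 0.
Proof.
move=> w_gt0 wsum0; have [//|no_le0] := pselect (exists j, c j <= 0).
have c_gt0 j : 0 < c j by rewrite ltNge; apply/negP => ?; apply: no_le0; exists j.
suff : 0 < \sum_j c j * w j by rewrite wsum0 ltxx.
rewrite (bigD1 j0) //=; apply: ltr_pwDl; first exact: mulr_gt0.
by apply: sumr_ge0 => j _; rewrite mulr_ge0 ?ltW.
Qed.

End FiniteWeightedSums.

Lemma powR_ge1 (R : realType) (a q : R) : 1 <= a -> 0 <= q -> 1 <= a `^ q.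
Proof. by move=> a_ge1 q_ge0; rewrite -(powRr0 a) ler_powR. Qed.

Theorem proposition2 (R : realType) (nu q : R) (k : nat)
  (pi lam c : 'I_k.+1 -> R) :
  0 < nu -> 0 <= q -> (1 <= k)%N ->
  (forall j, 0 < pi j) -> \sum_(j < k.+1) pi j = 1 ->
  (forall j, 1 <= lam j) ->
  \sum_(j < k.+1) c j = 1 ->
  \sum_(j < k.+1) c j * lam j = 0 ->
  0 < nu * (\sum_(j < k.+1) (c j ^+ 2 * lam j `^ q / pi j) - 1).
Proof.
move=> nu_gt0 q_ge0 _ pi_gt0 sum_pi lam_ge1 sum_c wsum_c.
rewrite mulr_gt0 // subr_gt0.
have lam_gt0 j : 0 < lam j by apply: lt_le_trans (lam_ge1 j).
have [j0 cj0_le0] := exists_le0_of_wsum_eq0 ord0 lam_gt0 wsum_c.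
have c_neq_pi : c j0 != pi j0 by rewrite lt_eqF // (le_lt_trans cj0_le0).
have pi_neq0 j : pi j != 0 by rewrite gt_eqF.
have chi2_gt0 := sum_sqr_div_gt0 pi_gt0 c_neq_pi.
rewrite -(sum_sqr_div_sub1 (c := c) pi_neq0 sum_pi sum_c) subr_gt0 in chi2_gt0.
apply: (lt_le_trans chi2_gt0); apply: ler_sum => j _.
rewrite [leRHS]mulrAC -[leLHS]mulr1 ler_wpM2l ?powR_ge1 //.
by rewrite divr_ge0 ?sqr_ge0 ?ltW.
Qed.
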